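(* Let $n\ge 1$ and let $\sigma,\tau\in S_n$. For every $i\in[n]$ the following hold: (i) $\sigma(i)\le i+c_i(\sigma)$; (ii) $c_i(\sigma\tau)\le c_i(\tau)+c_{\tau(i)}(\sigma)$; (iii) the map $\sigma^{-1}$ restricts to a bijection from $A(\sigma^{-1})_{\sigma(i)}$ onto $A(\sigma)_i$; in particular $i+c_i(\sigma)=\sigma(i)+c_{\sigma(i)}(\sigma^{-1})$.
   Context: $[n]=\{1,\dots,n\}$ and $S_n$ is the group of permutations of $[n]$. Composition is $(\sigma\tau)(i)=\sigma(\tau(i))$. For $\sigma\in S_n$ and $i\in[n]$ let $C(\sigma)_i=\{j\in[n]: j>i \text{ and } \sigma(j)<\sigma(i)\}$, $c_i(\sigma)=|C(\sigma)_i|$ (so $[c_1(\sigma),\dots,c_n(\sigma)]$ is the Lehmer code of $\sigma$), and $A(\sigma)_i=[i]\cup C(\sigma)_i$. *)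

(* [n] = {1..n} is modelled by 'I_n = {0..n-1} via the
   order-preserving shift k |-> k-1; all notions below only use the order. *)
From mathcomp Require Import all_boot all_order all_fingroup.
Set Implicit Arguments. Unset Strict Implicit. Unset Printing Implicit Defensive.

(* Paper's composition: (sigma tau)(i) = sigma(tau(i)).  MathComp's perm
   product satisfies (s * t) x = t (s x), hence the swap. *)
Definition permcomp n (s t : {perm 'I_n}) : {perm 'I_n} := (t * s)%g.

Definition Cset n (s : {perm 'I_n}) (i : 'I_n) : {set 'I_n} :=
  [set j : 'I_n | (i < j) && (s j < s i)].

Definition lehmer n (s : {perm 'I_n}) (i : 'I_n) : nat := #|Cset s i|.

Definition Aset n (s : {perm 'I_n}) (i : 'I_n) : {set 'I_n} :=
  [set j : 'I_n | j <= i] :|: Cset s i.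

From mathcomp Require Import all_boot all_order all_fingroup.

(* The set A(sigma)_i is {j : j <= i or sigma j < sigma i}, a disjoint union of
   [i] and C(sigma)_i, so #|A(sigma)_i| = #|[i]| + c_i(sigma).  Up to the single
   point i itself, "j < i or sigma j < sigma i" is symmetric under exchanging
   the roles of (j, sigma j), so sigma^-1 maps A(sigma^-1)_(sigma i) onto
   A(sigma)_i; comparing cardinalities gives i + c_i(sigma) = sigma i +
   c_(sigma i)(sigma^-1), and (i) follows.  For (ii), an inversion j of
   sigma tau at i is either an inversion of tau at i or has tau j in
   C(sigma)_(tau i). *)

Lemma card_ord_le n (i : 'I_n) : #|[set j : 'I_n | j <= i]| = i.+1.
Proof.
have -> : [set j : 'I_n | j <= i] = widen_ord (ltn_ord i) @: [set: 'I_i.+1].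
  apply/setP => j; rewrite inE; apply/idP/imsetP => [le_ji | [k _ ->]].
    by exists (Ordinal (le_ji : j < i.+1)) => //; apply: val_inj.
  by rewrite /= -ltnS.
rewrite card_imset ?cardsT ?card_ord //.
by move=> a b /(congr1 val) /= /val_inj.
Qed.

Section Lehmer.

Variable n : nat.
Implicit Types (s t : {perm 'I_n}) (i j : 'I_n).

Lemma mem_Aset s i j : (j \in Aset s i) = (j <= i) || (s j < s i).
Proof. by rewrite !inE; case: leqP. Qed.

Lemma card_Aset s i : #|Aset s i| = i.+1 + lehmer s i.
Proof.
rewrite cardsU card_ord_le /lehmer.
suff -> : [set j : 'I_n | j <= i] :&: Cset s i = set0 by rewrite cards0 subn0.
apply/setP => j; rewrite !inE; apply/negbTE.
by case: leqP => //= /ltnW; rewrite ltnNge => /negbTE ->.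
Qed.

Lemma mem_Aset_permV s i j : (s j \in Aset (s^-1)%g (s i)) = (j \in Aset s i).
Proof.
rewrite !mem_Aset !permK [s j <= s i]leq_eqVlt [j <= i]leq_eqVlt.
have -> : (val (s j) == val (s i)) = (val j == val i).
  by rewrite !val_eqE (inj_eq (@perm_inj _ s)).
by case: (val j == val i); rewrite ?orbT // orbC.
Qed.

Lemma imset_permV_Aset s i : (s^-1)%g @: Aset (s^-1)%g (s i) = Aset s i.
Proof.
apply/setP => j.
by rewrite -{1}(permK s j) mem_imset ?mem_Aset_permV //; apply: perm_inj.
Qed.

Lemma lehmer_permV s i : i + lehmer s i = s i + lehmer (s^-1)%g (s i).
Proof.
apply/succn_inj; rewrite -!addSn -!card_Aset -imset_permV_Aset.
by rewrite card_imset //; apply: perm_inj.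
Qed.

Lemma perm_le_add_lehmer s i : s i <= i + lehmer s i.
Proof. by rewrite lehmer_permV leq_addr. Qed.

Lemma Cset_permcomp_sub s t i :
  Cset (permcomp s t) i \subset Cset t i :|: t @^-1: Cset s (t i).
Proof.
apply/subsetP => j; rewrite !inE /permcomp !permM => /andP [lt_ij lt_st].
case: (ltngtP (t j) (t i)) => [_|_|eq_t]; rewrite ?lt_ij ?lt_st ?orbT //.
by move: lt_ij; rewrite (perm_inj (val_inj eq_t)) ltnn.
Qed.

Lemma lehmer_permcomp s t i :
  lehmer (permcomp s t) i <= lehmer t i + lehmer s (t i).
Proof.
apply: leq_trans (subset_leq_card (Cset_permcomp_sub s t i)) _.
apply: leq_trans (leq_card_setU _ _) _.
by rewrite card_preimset //; apply: perm_inj.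
Qed.

End Lehmer.

Theorem lemma3p1 (n : nat) (hn : 0 < n) (sigma tau : {perm 'I_n}) (i : 'I_n) :
  [/\ sigma i <= i + lehmer sigma i,
      lehmer (permcomp sigma tau) i <= lehmer tau i + lehmer sigma (tau i),
      {in Aset (sigma^-1)%g (sigma i), injective (sigma^-1)%g}
        /\ [set (sigma^-1)%g x | x in Aset (sigma^-1)%g (sigma i)] = Aset sigma i
    & i + lehmer sigma i = sigma i + lehmer (sigma^-1)%g (sigma i)].
Proof.
split; [exact: perm_le_add_lehmer | exact: lehmer_permcomp | split | ].
- by move=> x _ y; apply: perm_inj.
- exact: imset_permV_Aset.
- exact: lehmer_permV.
Qed.
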